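(* Consider the second-order Kuramoto model with bonding force $$\dot\theta_i=\omega_i,\qquad \dot\omega_i=\frac{1}{N}\sum_{j=1}^N\big[\kappa_0\cos(\theta_j-\theta_i)+\kappa_1\big](\omega_j-\omega_i)+\frac{\kappa_2}{N}\sum_{j=1}^N\big[|\theta_j-\theta_i|-\theta^\infty_{ij}\big]\operatorname{sgn}(\theta_j-\theta_i),\quad i\in[N].$$ Suppose the initial data $(\Theta^0,W^0)=(\theta_1^0,\dots,\theta_N^0,\omega_1^0,\dots,\omega_N^0)$ and parameters satisfy $$(\Theta^0,W^0)\in\mathcal{S},\qquad \kappa_0\cos\mathcal{U}+\kappa_1>0,\qquad \kappa_2>0,$$ and for some $\tau\in(0,\infty]$ let $\{(\theta_i,\omega_i)\}$ be a solution on $[0,\tau)$ with these initial data. Then $(\Theta(t),W(t))\in\mathcal{S}$ for all $t\in[0,\tau)$.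
   Context: $N\ge2$, $[N]=\{1,\dots,N\}$, $\kappa_0,\kappa_1\ge0$, $\kappa_2>0$ constants; $[\theta^\infty_{ij}]$ real $N\times N$ matrix with $\theta^\infty_{ii}=0$, $\theta^\infty_{ij}=\theta^\infty_{ji}$; $\operatorname{sgn}$ is the sign function. Energy: $\mathcal{E}:=\frac12\sum_i|\omega_i|^2+\frac{\kappa_2}{4N}\sum_{i,j}(|\theta_j-\theta_i|-\theta^\infty_{ij})^2$, and $\mathcal{E}(0)$ its value at the initial data. Define $\mathcal{U}:=\max_{i\ne j}\theta^\infty_{ij}+\sqrt{2N\mathcal{E}(0)/\kappa_2}$ and $\mathcal{S}:=\{(\Theta,W)\in\mathbb{R}^{2N}: |\theta_i-\theta_j|<\mathcal{U}<\pi \text{ for all } i,j\in[N]\}$ (in particular membership requires $\mathcal{U}<\pi$). A solution means a smooth (classical $C^1$) solution. *)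

From Stdlib Require Import Reals Lra List.
From Coquelicot Require Import Coquelicot.
Import ListNotations.
Open Scope R_scope.

(* Oscillators are indexed by natural numbers 0 .. N-1 (i.e. i < N). *)

Definition sgn (x : R) : R :=
  if Rlt_dec 0 x then 1 else if Rlt_dec x 0 then -1 else 0.

Definition sumN (N : nat) (f : nat -> R) : R :=
  fold_right Rplus 0 (map f (seq 0 N)).

Definition offdiag_pairs (N : nat) : list (nat * nat) :=
  filter (fun p => negb (Nat.eqb (fst p) (snd p)))
         (list_prod (seq 0 N) (seq 0 N)).

(* max_{i <> j} thinf i j ; for N >= 2 the default (0,1) is itself an
   off-diagonal pair, so this is the genuine maximum. *)
Definition max_offdiag (N : nat) (thinf : nat -> nat -> R) : R :=
  fold_right (fun p m => Rmax (thinf (fst p) (snd p)) m)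
             (thinf 0%nat 1%nat) (offdiag_pairs N).

Definition energy (N : nat) (k2 : R) (thinf : nat -> nat -> R)
  (Th W : nat -> R) : R :=
  / 2 * sumN N (fun i => (W i) ^ 2)
  + k2 / (4 * INR N) *
    sumN N (fun i => sumN N (fun j =>
       (Rabs (Th j - Th i) - thinf i j) ^ 2)).

Definition U_bound (N : nat) (k2 : R) (thinf : nat -> nat -> R) (E0 : R) : R :=
  max_offdiag N thinf + sqrt (2 * INR N * E0 / k2).

(* membership of (Theta, W) in S (only Theta matters) *)
Definition in_S (N : nat) (U : R) (Th : nat -> R) : Prop :=
  U < PI /\ forall i j, (i < N)%nat -> (j < N)%nat -> Rabs (Th i - Th j) < U.

Definition kuramoto_rhs (N : nat) (k0 k1 k2 : R) (thinf : nat -> nat -> R)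
  (Th W : nat -> R) (i : nat) : R :=
  / INR N * sumN N (fun j => (k0 * cos (Th j - Th i) + k1) * (W j - W i))
  + k2 / INR N * sumN N (fun j =>
      (Rabs (Th j - Th i) - thinf i j) * sgn (Th j - Th i)).

Definition is_solution (N : nat) (k0 k1 k2 : R) (thinf : nat -> nat -> R)
  (tau : Rbar) (theta omega : R -> nat -> R) : Prop :=
  forall i, (i < N)%nat ->
    filterlim (fun s => theta s i) (at_right 0) (locally (theta 0 i)) /\
    filterlim (fun s => omega s i) (at_right 0) (locally (omega 0 i)) /\
    (forall t, 0 < t -> Rbar_lt t tau ->
       is_derive (fun s => theta s i) t (omega t i) /\
       is_derive (fun s => omega s i) t
         (kuramoto_rhs N k0 k1 k2 thinf (theta t) (omega t) i)).

(* The energy is nonincreasing as long as every phase gap stays below U < pi: all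
   couplings k0 cos(th_j - th_i) + k1 are then positive, and formally
   dE/dt = -(1/2N) sum_{i,j} (k0 cos(th_j - th_i) + k1) (w_j - w_i)^2 <= 0.
   Because of the terms |th_j - th_i|, E only has one-sided derivatives at collisions;
   their sum is twice the formal derivative, and this suffices for monotonicity.
   Each term (|th_j - th_i| - thinf_ij)^2 is at most 2N E / k2, so
   |th_i - th_j| <= max thinf + sqrt (2N E(t) / k2) <= U.  The inequality is strict:
   either E(t) < E(0), or E is constant on [0, t], the dissipation vanishes, all
   velocities coincide and the phase gaps are those at time 0.  A real induction on
   [0, t] then keeps the solution in S. *)

From Stdlib Require Import Reals Lra Lia List Classical.
From Coquelicot Require Import Coquelicot.
Open Scope R_scope.

(** * Finite sums *)

Lemma sumN_S n f : sumN (S n) f = sumN n f + f n.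
Proof.
  unfold sumN; rewrite seq_S, map_app, fold_right_app; simpl.
  generalize (f n); induction (map f (seq 0 n)) as [|a l IH]; intros x; simpl; [ring|].
  rewrite IH; ring.
Qed.

Lemma sumN_ext n f g : (forall i, (i < n)%nat -> f i = g i) -> sumN n f = sumN n g.
Proof.
  induction n as [|n IH]; intros Hfg; [reflexivity|].
  rewrite !sumN_S, IH, Hfg; auto.
Qed.

Lemma sumN_plus n f g : sumN n (fun i => f i + g i) = sumN n f + sumN n g.
Proof. induction n as [|n IH]; [cbv; ring|]. rewrite !sumN_S, IH; ring. Qed.

Lemma sumN_scal n c f : sumN n (fun i => c * f i) = c * sumN n f.
Proof. induction n as [|n IH]; [cbv; ring|]. rewrite !sumN_S, IH; ring. Qed.

Lemma sumN_swap n m F :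
  sumN n (fun i => sumN m (F i)) = sumN m (fun j => sumN n (fun i => F i j)).
Proof.
  induction n as [|n IH].
  - induction m as [|m IHm]; [reflexivity|]. rewrite sumN_S, <- IHm. cbv; ring.
  - rewrite sumN_S, IH, <- sumN_plus. apply sumN_ext; intros j _. now rewrite sumN_S.
Qed.

Lemma sumN_symmetrize n F :
  sumN n (fun i => sumN n (F i)) = / 2 * sumN n (fun i => sumN n (fun j => F i j + F j i)).
Proof.
  assert (H := sumN_swap n n F).
  rewrite (sumN_ext n (fun i => sumN n (fun j => F i j + F j i))
    (fun i => sumN n (F i) + sumN n (fun j => F j i))) by (intros; apply sumN_plus).
  rewrite sumN_plus, <- H. field.
Qed.

Lemma sumN_nonneg n f : (forall i, (i < n)%nat -> 0 <= f i) -> 0 <= sumN n f.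
Proof.
  induction n as [|n IH]; intros Hf; [cbv; lra|]. rewrite sumN_S.
  assert (0 <= f n) by (apply Hf; lia). assert (0 <= sumN n f) by (apply IH; auto). lra.
Qed.

Lemma sumN_le_term n f k : (forall i, (i < n)%nat -> 0 <= f i) -> (k < n)%nat -> f k <= sumN n f.
Proof.
  induction n as [|n IH]; intros Hf Hk; [lia|]. rewrite sumN_S.
  destruct (Nat.eq_dec k n) as [->|Hkn].
  - assert (0 <= sumN n f) by (apply sumN_nonneg; auto). lra.
  - assert (f k <= sumN n f) by (apply IH; auto; lia). assert (0 <= f n) by (apply Hf; lia). lra.
Qed.

Lemma sumN_le_two_terms n f k l : (forall i, (i < n)%nat -> 0 <= f i) ->
  (k < n)%nat -> (l < n)%nat -> k <> l -> f k + f l <= sumN n f.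
Proof.
  induction n as [|n IH]; intros Hf Hk Hl Hkl; [lia|]. rewrite sumN_S.
  destruct (Nat.eq_dec k n) as [->|Hkn]; [|destruct (Nat.eq_dec l n) as [->|Hln]].
  - assert (f l <= sumN n f) by (apply sumN_le_term; auto; lia). lra.
  - assert (f k <= sumN n f) by (apply sumN_le_term; auto; lia). lra.
  - assert (f k + f l <= sumN n f) by (apply IH; auto; lia).
    assert (0 <= f n) by (apply Hf; lia). lra.
Qed.

Lemma sumN_eq0_term n f k : (forall i, (i < n)%nat -> 0 <= f i) -> sumN n f = 0 ->
  (k < n)%nat -> f k = 0.
Proof. intros Hf Hs Hk. pose proof (sumN_le_term n f k Hf Hk). pose proof (Hf k Hk). lra. Qed.

(** * One-sided continuity and derivatives *)

Lemma at_right_lt u d : 0 < d -> at_right u (fun x => u < x < u + d).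
Proof.
  intros Hd. exists (mkposreal d Hd). intros x Hx Hux.
  apply Rabs_lt_between' in Hx. simpl in Hx. lra.
Qed.

Lemma at_right_ex u P : at_right u P -> exists d, 0 < d /\ forall h, 0 < h < d -> P (u + h).
Proof.
  intros [d Hd]. exists d. split; [apply cond_pos|]. intros h Hh. apply Hd; [|lra].
  change (Rabs (u + h - u) < d). rewrite Rabs_pos_eq; lra.
Qed.

Lemma at_right_ex_pt u P : at_right u P -> exists x, u < x /\ P x.
Proof.
  intros HP. destruct (at_right_ex u P HP) as [d [Hd H]].
  exists (u + d / 2). split; [lra|]. apply H; lra.
Qed.

Lemma filter_forall_lt {T : Type} (F : (T -> Prop) -> Prop) {FF : Filter F} n
  (P : nat -> T -> Prop) :
  (forall i, (i < n)%nat -> F (P i)) -> F (fun x => forall i, (i < n)%nat -> P i x).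
Proof.
  induction n as [|n IH]; intros HP.
  - apply (filter_forall (F := F)). intros x i Hi. lia.
  - generalize (filter_and (F := F) _ _ (IH (fun i Hi => HP i ltac:(lia))) (HP n ltac:(lia))).
    apply filter_imp. intros x [Hlt Hn] i Hi.
    destruct (Nat.eq_dec i n) as [->|Hin]; [exact Hn|apply Hlt; lia].
Qed.

Definition right_cont (f : R -> R) (u : R) : Prop :=
  filterlim f (at_right u) (locally (f u)).

Lemma right_cont_near f u eps : right_cont f u -> 0 < eps ->
  at_right u (fun x => Rabs (f x - f u) < eps).
Proof. intros Hf He. exact (proj1 (filterlim_locally f (f u)) Hf (mkposreal eps He)). Qed.

Lemma right_cont_lt_eventually f u M : right_cont f u -> f u < M -> at_right u (fun x => f x < M).
Proof.
  intros Hf HM. generalize (right_cont_near f u (M - f u) Hf ltac:(lra)).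
  apply filter_imp. intros x Hx. apply Rabs_def2 in Hx. lra.
Qed.

Lemma right_cont_ext f g u : (forall x, f x = g x) -> right_cont f u -> right_cont g u.
Proof.
  intros Efg Hf. unfold right_cont. rewrite <- Efg.
  exact (filterlim_ext f g Efg Hf).
Qed.

Lemma right_cont_const a u : right_cont (fun _ => a) u.
Proof. apply filterlim_const. Qed.

Lemma right_cont_plus f g u : right_cont f u -> right_cont g u -> right_cont (fun x => f x + g x) u.
Proof. intros Hf Hg. exact (filterlim_comp_2 f g Rplus Hf Hg (filterlim_plus (f u) (g u))). Qed.

Lemma right_cont_mult f g u : right_cont f u -> right_cont g u -> right_cont (fun x => f x * g x) u.
Proof. intros Hf Hg. exact (filterlim_comp_2 f g Rmult Hf Hg (filterlim_mult (f u) (g u))). Qed.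

Lemma right_cont_opp f u : right_cont f u -> right_cont (fun x => - f x) u.
Proof. intros Hf. eapply filterlim_comp; [exact Hf|apply (filterlim_opp (f u))]. Qed.

Lemma right_cont_minus f g u : right_cont f u -> right_cont g u ->
  right_cont (fun x => f x - g x) u.
Proof. intros Hf Hg. exact (right_cont_plus f (fun x => - g x) u Hf (right_cont_opp g u Hg)). Qed.

Lemma right_cont_abs f u : right_cont f u -> right_cont (fun x => Rabs (f x)) u.
Proof. intros Hf. eapply filterlim_comp; [exact Hf|apply continuous_Rabs]. Qed.

Lemma right_cont_sqr f u : right_cont f u -> right_cont (fun x => f x ^ 2) u.
Proof.
  intros Hf. apply (right_cont_ext (fun x => f x * f x)); [intros; ring|].
  now apply right_cont_mult.
Qed.

Lemma right_cont_sum n F u : (forall i, (i < n)%nat -> right_cont (fun x => F x i) u) ->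
  right_cont (fun x => sumN n (F x)) u.
Proof.
  induction n as [|n IH]; intros HF; [apply right_cont_const|].
  apply (right_cont_ext (fun x => sumN n (F x) + F x n)); [intros; symmetry; apply sumN_S|].
  apply right_cont_plus; [apply IH; intros; apply HF|apply HF]; lia.
Qed.

Definition right_deriv (f : R -> R) (u l : R) : Prop :=
  forall eps, 0 < eps -> at_right u (fun x => Rabs (f x - f u - l * (x - u)) <= eps * (x - u)).

Lemma right_deriv_ext f g u l : (forall x, f x = g x) -> right_deriv f u l -> right_deriv g u l.
Proof.
  intros Efg Hf eps He. generalize (Hf eps He). apply filter_imp.
  intros x. now rewrite !Efg.
Qed.

Lemma right_deriv_growth f u l : right_deriv f u l ->
  at_right u (fun x => Rabs (f x - f u) <= (Rabs l + 1) * (x - u)).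
Proof.
  intros Hf. generalize (Hf 1 Rlt_0_1). apply filter_imp. intros x Hx.
  assert (Hxu : 0 <= x - u) by (pose proof (Rabs_pos (f x - f u - l * (x - u))); lra).
  replace (f x - f u) with ((f x - f u - l * (x - u)) + l * (x - u)) by ring.
  eapply Rle_trans; [apply Rabs_triang|].
  rewrite Rabs_mult, (Rabs_pos_eq (x - u)) by exact Hxu. lra.
Qed.

Lemma right_deriv_cont f u l : right_deriv f u l -> right_cont f u.
Proof.
  intros Hf. apply filterlim_locally. intros [eps He]. pose proof (Rabs_pos l).
  set (d := eps / (Rabs l + 1)).
  assert (Hd : 0 < d) by (apply Rdiv_lt_0_compat; lra).
  assert (Hdl : (Rabs l + 1) * d = eps) by (unfold d; field; lra).
  generalize (filter_and (F := at_right u) _ _ (right_deriv_growth f u l Hf) (at_right_lt u d Hd)).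
  apply filter_imp. intros x [Hx Hxd]. change (Rabs (f x - f u) < eps). nra.
Qed.

Lemma right_deriv_plus f g u lf lg : right_deriv f u lf -> right_deriv g u lg ->
  right_deriv (fun x => f x + g x) u (lf + lg).
Proof.
  intros Hf Hg eps He.
  generalize (filter_and (F := at_right u) _ _ (Hf (eps / 2) ltac:(lra)) (Hg (eps / 2) ltac:(lra))).
  apply filter_imp. intros x [Af Ag].
  replace (f x + g x - (f u + g u) - (lf + lg) * (x - u))
    with ((f x - f u - lf * (x - u)) + (g x - g u - lg * (x - u))) by ring.
  eapply Rle_trans; [apply Rabs_triang|]. lra.
Qed.

Lemma right_deriv_minus f g u lf lg : right_deriv f u lf -> right_deriv g u lg ->
  right_deriv (fun x => f x - g x) u (lf - lg).
Proof.
  intros Hf Hg eps He.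
  generalize (filter_and (F := at_right u) _ _ (Hf (eps / 2) ltac:(lra)) (Hg (eps / 2) ltac:(lra))).
  apply filter_imp. intros x [Af Ag].
  replace (f x - g x - (f u - g u) - (lf - lg) * (x - u))
    with ((f x - f u - lf * (x - u)) + - (g x - g u - lg * (x - u))) by ring.
  eapply Rle_trans; [apply Rabs_triang|]. rewrite Rabs_Ropp. lra.
Qed.

Lemma right_deriv_sub_const f a u l : right_deriv f u l -> right_deriv (fun x => f x - a) u l.
Proof.
  intros Hf eps He. generalize (Hf eps He). apply filter_imp. intros x.
  now replace (f x - a - (f u - a)) with (f x - f u) by ring.
Qed.

Lemma right_deriv_scal c f u l : right_deriv f u l -> right_deriv (fun x => c * f x) u (c * l).
Proof.
  intros Hf eps He. pose proof (Rabs_pos c).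
  generalize (Hf (eps / (Rabs c + 1)) ltac:(apply Rdiv_lt_0_compat; lra)).
  apply filter_imp. intros x Hx.
  replace (c * f x - c * f u - c * l * (x - u)) with (c * (f x - f u - l * (x - u))) by ring.
  rewrite Rabs_mult.
  assert (Hxu : 0 <= x - u).
  { pose proof (Rabs_pos (f x - f u - l * (x - u))).
    assert (0 < eps / (Rabs c + 1)) by (apply Rdiv_lt_0_compat; lra). nra. }
  assert (E : (Rabs c + 1) * (eps / (Rabs c + 1) * (x - u)) = eps * (x - u)) by (field; lra).
  pose proof (Rabs_pos (f x - f u - l * (x - u))). nra.
Qed.

Lemma right_deriv_sqr f u l : right_deriv f u l -> right_deriv (fun x => f x ^ 2) u (2 * f u * l).
Proof.
  intros Hf eps He. pose proof (Rabs_pos (f u)). pose proof (Rabs_pos l).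
  set (e1 := eps / (2 * (2 * Rabs (f u) + 1))).
  set (e2 := eps / (2 * (Rabs l + 1))).
  assert (He1 : 0 < e1) by (apply Rdiv_lt_0_compat; lra).
  assert (He2 : 0 < e2) by (apply Rdiv_lt_0_compat; lra).
  assert (E1 : 2 * (2 * Rabs (f u) + 1) * e1 = eps) by (unfold e1; field; lra).
  assert (E2 : 2 * (Rabs l + 1) * e2 = eps) by (unfold e2; field; lra).
  generalize (filter_and (F := at_right u) _ _ (Hf e1 He1)
    (filter_and (F := at_right u) _ _ (right_deriv_growth f u l Hf)
       (right_cont_near f u e2 (right_deriv_cont f u l Hf) He2))).
  apply filter_imp. intros x [A [B C]].
  set (d := f x - f u) in *.
  replace (f x ^ 2 - f u ^ 2 - 2 * f u * l * (x - u))
    with (2 * f u * (d - l * (x - u)) + d * d) by (unfold d; ring).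
  eapply Rle_trans; [apply Rabs_triang|]. rewrite !Rabs_mult, (Rabs_pos_eq 2) by lra.
  assert (Hxu : 0 <= x - u) by (pose proof (Rabs_pos d); nra).
  pose proof (Rabs_pos d). pose proof (Rabs_pos (d - l * (x - u))).
  assert (Rabs d * Rabs d <= e2 * ((Rabs l + 1) * (x - u))) by (apply Rmult_le_compat; lra).
  assert (2 * Rabs (f u) * Rabs (d - l * (x - u)) <= 2 * Rabs (f u) * (e1 * (x - u))) by nra.
  nra.
Qed.

Definition abs_rslope (x v : R) : R :=
  if Rlt_dec 0 x then v else if Rlt_dec x 0 then - v else Rabs v.

Lemma abs_rslope_odd_part x v : abs_rslope x v - abs_rslope x (- v) = 2 * sgn x * v.
Proof.
  unfold abs_rslope, sgn.
  destruct (Rlt_dec 0 x); [ring|]. destruct (Rlt_dec x 0); [ring|].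
  rewrite Rabs_Ropp. ring.
Qed.

Lemma right_deriv_abs f u l : right_deriv f u l ->
  right_deriv (fun x => Rabs (f x)) u (abs_rslope (f u) l).
Proof.
  intros Hf eps He. pose proof (right_deriv_cont f u l Hf) as Hc.
  unfold abs_rslope.
  destruct (Rlt_dec 0 (f u)) as [Hp|Hp]; [|destruct (Rlt_dec (f u) 0) as [Hn|Hn]].
  - generalize (filter_and (F := at_right u) _ _ (Hf eps He) (right_cont_near f u _ Hc Hp)).
    apply filter_imp. intros x [A B]. apply Rabs_def2 in B.
    now rewrite (Rabs_pos_eq (f x)), (Rabs_pos_eq (f u)) by lra.
  - generalize (filter_and (F := at_right u) _ _ (Hf eps He)
      (right_cont_near f u (- f u) Hc ltac:(lra))).
    apply filter_imp. intros x [A B]. apply Rabs_def2 in B.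
    rewrite (Rabs_left (f x)), (Rabs_left (f u)) by lra.
    replace (- f x - - f u - - l * (x - u)) with (- (f x - f u - l * (x - u))) by ring.
    now rewrite Rabs_Ropp.
  - assert (Hz : f u = 0) by lra.
    generalize (Hf eps He). apply filter_imp. intros x A. rewrite Hz in A |- *.
    assert (Hxu : 0 <= x - u) by (pose proof (Rabs_pos (f x - 0 - l * (x - u))); nra).
    replace (Rabs l * (x - u)) with (Rabs (l * (x - u)))
      by (rewrite Rabs_mult, (Rabs_pos_eq (x - u)); auto).
    rewrite Rabs_R0. eapply Rle_trans; [|exact A].
    replace (f x - 0 - l * (x - u)) with (f x - l * (x - u)) by ring.
    rewrite Rminus_0_r. apply Rabs_triang_inv2.
Qed.

Lemma right_deriv_sum n F u l : (forall i, (i < n)%nat -> right_deriv (fun x => F x i) u (l i)) ->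
  right_deriv (fun x => sumN n (F x)) u (sumN n l).
Proof.
  induction n as [|n IH]; intros HF.
  - intros eps He. generalize (at_right_lt u 1 Rlt_0_1). apply filter_imp.
    intros x Hx. cbv [sumN fold_right map seq].
    rewrite Rminus_0_r, Rmult_0_l, Rminus_0_r, Rabs_R0. nra.
  - apply (right_deriv_ext (fun x => sumN n (F x) + F x n)); [intros; symmetry; apply sumN_S|].
    rewrite sumN_S. apply right_deriv_plus; [apply IH; auto|]; apply HF; lia.
Qed.

Lemma right_deriv_of_is_derive f u l : is_derive f u l -> right_deriv f u l.
Proof.
  intros [_ Hd] eps He. specialize (Hd u (fun P HP => HP) (mkposreal eps He)).
  unfold at_right, within. generalize Hd. apply filter_imp. intros x Hx Hux.
  change (Rabs (f x - f u - (x - u) * l) <= eps * Rabs (x - u)) in Hx.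
  rewrite (Rabs_pos_eq (x - u)) in Hx by lra. now rewrite (Rmult_comm l).
Qed.

Lemma right_deriv_locally_const f u l : right_deriv f u l ->
  at_right u (fun x => f x = f u) -> l = 0.
Proof.
  intros Hf Hc. destruct (Req_dec l 0) as [|Hl]; [assumption|exfalso].
  assert (Hl' : 0 < Rabs l) by (apply Rabs_pos_lt; exact Hl).
  destruct (at_right_ex_pt u _ (filter_and (F := at_right u) _ _ (Hf (Rabs l / 2) ltac:(lra)) Hc))
    as [x [Hux [A E]]].
  rewrite E, Rminus_eq_0, Rminus_0_l, Rabs_Ropp, Rabs_mult, (Rabs_pos_eq (x - u)) in A by lra.
  nra.
Qed.

(* Left-sided notions are obtained by reflection x |-> -x: [left_deriv f u l] means
   f (u - k) = f u - l k + o(k) as k -> 0+. *)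

Definition left_deriv (f : R -> R) (u l : R) : Prop :=
  right_deriv (fun x => f (- x)) (- u) (- l).

Definition left_cont (f : R -> R) (u : R) : Prop :=
  right_cont (fun x => f (- x)) (- u).

Lemma left_deriv_cont f u l : left_deriv f u l -> left_cont f u.
Proof. apply right_deriv_cont. Qed.

Lemma left_deriv_near f u l eps : left_deriv f u l -> 0 < eps ->
  exists d, 0 < d /\ forall k, 0 < k < d -> Rabs (f (u - k) - f u + l * k) <= eps * k.
Proof.
  intros Hf He. destruct (at_right_ex _ _ (Hf eps He)) as [d [Hd H]].
  exists d. split; [exact Hd|]. intros k Hk. specialize (H k Hk).
  replace (- u + k - - u) with k in H by ring.
  replace (- (- u + k)) with (u - k) in H by ring. rewrite Ropp_involutive in H.
  now replace (f (u - k) - f u + l * k) with (f (u - k) - f u - - l * k) by ring.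
Qed.

Lemma left_cont_le f u M d : left_cont f u -> 0 < d ->
  (forall k, 0 < k < d -> f (u - k) <= M) -> f u <= M.
Proof.
  intros Hf Hd HM. apply le_epsilon. intros eta Heta.
  destruct (at_right_ex _ _ (right_cont_near _ _ eta Hf Heta)) as [d' [Hd' H]].
  set (k := Rmin d d' / 2).
  assert (Hm : 0 < Rmin d d') by (apply Rmin_glb_lt; lra).
  pose proof (Rmin_l d d'). pose proof (Rmin_r d d').
  specialize (H k ltac:(unfold k; lra)). specialize (HM k ltac:(unfold k; lra)).
  replace (- (- u + k)) with (u - k) in H by ring. rewrite Ropp_involutive in H.
  apply Rabs_def2 in H. lra.
Qed.

Lemma left_deriv_minus f g u lf lg : left_deriv f u lf -> left_deriv g u lg ->
  left_deriv (fun x => f x - g x) u (lf - lg).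
Proof.
  intros Hf Hg. unfold left_deriv. replace (- (lf - lg)) with (- lf - - lg) by ring.
  now apply (right_deriv_minus (fun x => f (- x)) (fun x => g (- x))).
Qed.

Lemma left_deriv_of_is_derive f u l : is_derive f u l -> left_deriv f u l.
Proof.
  intros Hf. apply right_deriv_of_is_derive.
  assert (Hopp : is_derive Ropp (- u) (-1)) by (auto_derive; auto).
  rewrite <- (Ropp_involutive u) in Hf.
  generalize (is_derive_comp f Ropp (- u) l (-1) Hf Hopp).
  change (scal (-1) l) with (-1 * l). now replace (-1 * l) with (- l) by ring.
Qed.

(** * Monotonicity from one-sided derivatives *)

Lemma real_induction (P : R -> Prop) a t : a <= t -> P a ->
  (forall b, a < b <= t -> (forall y, a <= y < b -> P y) -> P b) ->
  (forall b, a <= b < t -> (forall y, a <= y <= b -> P y) -> at_right b P) ->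
  P t.
Proof.
  intros Hat Ha Hclosed Hopen.
  set (S := fun w => a <= w <= t /\ forall y, a <= y <= w -> P y).
  assert (HSa : S a) by (split; [lra|]; intros y Hy; now replace y with a by lra).
  destruct (completeness S) as [b [Hub Hlub]].
  { exists t. intros w [Hw _]. lra. }
  { exists a. exact HSa. }
  assert (Hab : a <= b) by (apply Hub, HSa).
  assert (Hbt : b <= t) by (apply Hlub; intros w [Hw _]; lra).
  assert (Hbelow : forall y, a <= y < b -> P y).
  { intros y Hy. apply NNPP. intros Hn.
    assert (b <= y); [|lra]. apply Hlub. intros w [Hw HP].
    destruct (Rle_dec w y) as [|Hwy]; [assumption|]. exfalso. apply Hn, HP. lra. }
  assert (Hb : P b).
  { destruct (Rle_lt_or_eq a b Hab) as [Hab'|<-]; [apply Hclosed; auto; lra|exact Ha]. }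
  destruct (Rle_lt_or_eq b t Hbt) as [Hbt'|<-]; [exfalso|exact Hb].
  assert (Hupto : forall y, a <= y <= b -> P y).
  { intros y Hy. destruct (Rle_lt_or_eq y b (proj2 Hy)) as [Hyb| ->]; [|exact Hb].
    apply Hbelow; lra. }
  destruct (at_right_ex b P (Hopen b ltac:(lra) Hupto)) as [d [Hd Hnear]].
  set (w := b + Rmin d (t - b) / 2).
  assert (Hm : 0 < Rmin d (t - b)) by (apply Rmin_glb_lt; lra).
  pose proof (Rmin_l d (t - b)). pose proof (Rmin_r d (t - b)).
  assert (HSw : S w).
  { split; [unfold w; lra|]. intros y Hy.
    destruct (Rle_lt_dec y b) as [Hyb|Hyb]; [apply Hupto; lra|].
    replace y with (b + (y - b)) by ring. apply Hnear. unfold w in Hy. lra. }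
  assert (w <= b) by (apply Hub, HSw). unfold w in *. lra.
Qed.

Section OneSidedMonotonicity.

Variables (g : R -> R) (s t : R).

Hypotheses (Hst : s <= t) (Hs : right_cont g s) (Ht : left_cont g t)
  (Hslopes : forall u, s < u < t ->
     exists l1 l2, right_deriv g u l1 /\ left_deriv g u l2 /\ l1 + l2 <= 0).

(* Real induction on [g y <= g s + eps (y - s + 1)].  The extra [eps] starts it at [s];
   at an interior point either the right slope is below [eps], or the left slope is at
   most [-eps], so [g] has just dropped strictly below the bound. *)
Lemma one_sided_growth_le eps : 0 < eps -> g t <= g s + eps * (t - s + 1).
Proof.
  intros He. set (P := fun y => g y <= g s + eps * (y - s + 1)).
  assert (Hmono : forall y z, y <= z -> g s + eps * (y - s + 1) <= g s + eps * (z - s + 1))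
    by (intros; nra).
  apply (real_induction P s t Hst); [unfold P; nra| |].
  - intros b Hb Hbefore. unfold P.
    assert (Hlc : left_cont g b).
    { destruct (Rle_lt_or_eq b t (proj2 Hb)) as [Hbt| ->]; [|exact Ht].
      destruct (Hslopes b ltac:(lra)) as [l1 [l2 [_ [Hl _]]]]. exact (left_deriv_cont g b l2 Hl). }
    apply (left_cont_le g b _ (b - s) Hlc ltac:(lra)). intros k Hk.
    eapply Rle_trans; [apply Hbefore; lra|]. apply Hmono; lra.
  - intros b Hb Hupto.
    assert (Hupto_b : g b <= g s + eps * (b - s + 1)) by (apply Hupto; lra).
    destruct (Rle_lt_or_eq s b (proj1 Hb)) as [Hsb| <-].
    2: { generalize (filter_and (F := at_right s) _ _ (at_right_lt s 1 Rlt_0_1)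
           (right_cont_lt_eventually g s (g s + eps) Hs ltac:(lra))).
         apply filter_imp. intros x [Hx Hgx]. unfold P. nra. }
    destruct (Hslopes b ltac:(lra)) as [l1 [l2 [Hr [Hl Hsum]]]].
    destruct (Rlt_le_dec l1 eps) as [Hl1|Hl1].
    + generalize (Hr (eps - l1) ltac:(lra)). apply filter_imp. intros x Hx.
      apply Rabs_le_between in Hx. unfold P. nra.
    + destruct (left_deriv_near g b l2 (eps / 2) Hl ltac:(lra)) as [d [Hd Hnear]].
      set (k := Rmin d (b - s) / 2).
      assert (Hm : 0 < Rmin d (b - s)) by (apply Rmin_glb_lt; lra).
      pose proof (Rmin_l d (b - s)). pose proof (Rmin_r d (b - s)).
      assert (Hk : 0 < k < d) by (unfold k; lra).
      specialize (Hnear k Hk). apply Rabs_le_between in Hnear.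
      assert (g (b - k) <= g s + eps * (b - k - s + 1)) by (apply Hupto; unfold k; lra).
      assert (Hlt : g b < g s + eps * (b - s + 1)) by nra.
      generalize (filter_and (F := at_right b) _ _ (at_right_lt b 1 Rlt_0_1)
        (right_cont_lt_eventually g b _ (right_deriv_cont g b l1 Hr) Hlt)).
      apply filter_imp. intros x [Hx Hgx]. unfold P. nra.
Qed.

Lemma nonincreasing_of_one_sided_derivs : g t <= g s.
Proof.
  apply le_epsilon. intros eps He.
  assert (Hpos : 0 < t - s + 1) by lra.
  replace (g s + eps) with (g s + eps / (t - s + 1) * (t - s + 1)) by (field; lra).
  apply one_sided_growth_le. apply Rdiv_lt_0_compat; lra.
Qed.

End OneSidedMonotonicity.

(** * The energy *)

Lemma sgn_opp x : sgn (- x) = - sgn x.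
Proof.
  unfold sgn. destruct (Rlt_dec 0 x), (Rlt_dec 0 (- x)), (Rlt_dec (- x) 0), (Rlt_dec x 0); lra.
Qed.

Lemma max_offdiag_ge N thinf i j : (i < N)%nat -> (j < N)%nat -> i <> j ->
  thinf i j <= max_offdiag N thinf.
Proof.
  intros Hi Hj Hij. unfold max_offdiag.
  assert (Hin : In (i, j) (offdiag_pairs N)).
  { apply filter_In. split; [apply in_prod; apply in_seq; lia|].
    simpl. now rewrite (proj2 (Nat.eqb_neq i j) Hij). }
  revert Hin. generalize (thinf 0%nat 1%nat).
  induction (offdiag_pairs N) as [|p l IH]; intros m Hin; [contradiction|].
  destruct Hin as [Hp|Hin]; simpl; [subst p; apply Rmax_l|].
  eapply Rle_trans; [apply IH, Hin|apply Rmax_r].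
Qed.

Definition dissipation N k0 k1 (Th W : nat -> R) : R :=
  / INR N * sumN N (fun i => sumN N (fun j => (k0 * cos (Th j - Th i) + k1) * (W j - W i) ^ 2)).

Section Energy.

Variables (N : nat) (k2 : R) (thinf : nat -> nat -> R).

Hypotheses (HN : (0 < N)%nat) (Hk2 : 0 < k2)
  (Hsym : forall i j, (i < N)%nat -> (j < N)%nat -> thinf i j = thinf j i).

Lemma INR_N_pos : 0 < INR N.
Proof. apply lt_0_INR, HN. Qed.

(* By symmetry of thinf the pair contributes twice to the double sum, as (i, j) and (j, i). *)
Lemma energy_ge_pair Th W i j : (i < N)%nat -> (j < N)%nat -> i <> j ->
  (Rabs (Th j - Th i) - thinf i j) ^ 2 <= 2 * INR N * energy N k2 thinf Th W / k2.
Proof.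
  intros Hi Hj Hij. pose proof INR_N_pos.
  set (P := fun i j => (Rabs (Th j - Th i) - thinf i j) ^ 2).
  assert (HP : forall i j, 0 <= P i j) by (intros; apply pow2_ge_0).
  assert (Hji : P j i = P i j) by (unfold P; now rewrite Rabs_minus_sym, Hsym).
  assert (Hrow : forall i, (i < N)%nat -> 0 <= sumN N (P i)) by (intros; apply sumN_nonneg; auto).
  assert (H2 : 2 * P i j <= sumN N (fun i => sumN N (P i))).
  { eapply Rle_trans; [|apply (sumN_le_two_terms N _ i j Hrow Hi Hj Hij)].
    pose proof (sumN_le_term N (P i) j (fun k _ => HP i k) Hj).
    pose proof (sumN_le_term N (P j) i (fun k _ => HP j k) Hi). lra. }
  assert (Hkin : 0 <= sumN N (fun i => W i ^ 2)) by (apply sumN_nonneg; intros; apply pow2_ge_0).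
  assert (Hc : 0 < k2 / (4 * INR N)) by (apply Rdiv_lt_0_compat; lra).
  assert (HE : k2 / (4 * INR N) * (2 * P i j) <= energy N k2 thinf Th W).
  { change (energy N k2 thinf Th W) with
      (/ 2 * sumN N (fun i => W i ^ 2) + k2 / (4 * INR N) * sumN N (fun i => sumN N (P i))).
    nra. }
  apply (Rmult_le_compat_l (2 * INR N / k2)) in HE; [|apply Rdiv_le_0_compat; lra].
  replace (2 * INR N / k2 * (k2 / (4 * INR N) * (2 * P i j))) with (P i j) in HE by (field; lra).
  replace (2 * INR N * energy N k2 thinf Th W / k2)
    with (2 * INR N / k2 * energy N k2 thinf Th W) by (field; lra).
  exact HE.
Qed.

Lemma pair_dist_lt_of_energy_lt Th W E' i j : (i < N)%nat -> (j < N)%nat -> i <> j ->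
  energy N k2 thinf Th W < E' ->
  Rabs (Th i - Th j) < max_offdiag N thinf + sqrt (2 * INR N * E' / k2).
Proof.
  intros Hi Hj Hij HE. pose proof INR_N_pos.
  assert (Hsq := energy_ge_pair Th W j i Hj Hi (not_eq_sym Hij)).
  assert (HE' : 2 * INR N * energy N k2 thinf Th W / k2 < 2 * INR N * E' / k2).
  { unfold Rdiv. apply Rmult_lt_compat_r; [apply Rinv_0_lt_compat; lra|]. nra. }
  assert (Hroot : Rabs (Rabs (Th i - Th j) - thinf j i) < sqrt (2 * INR N * E' / k2)).
  { rewrite <- sqrt_Rsqr_abs. apply sqrt_lt_1_alt. rewrite Rsqr_pow2.
    split; [apply pow2_ge_0|lra]. }
  pose proof (max_offdiag_ge N thinf j i Hj Hi (not_eq_sym Hij)).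
  pose proof (Rle_abs (Rabs (Th i - Th j) - thinf j i)). lra.
Qed.

(* Along a motion with phases Th, velocities W, right derivatives V of the phases and A of
   the velocities, the right derivative of the energy is [energy_rslope Th W V A]; by time
   reflection the left derivative is [- energy_rslope Th W (-W) (-A)].  Both agree with
   the formal derivative [energy_power] away from collisions Th i = Th j. *)
Definition energy_rslope (Th W V A : nat -> R) : R :=
  / 2 * sumN N (fun i => 2 * W i * A i)
  + k2 / (4 * INR N) * sumN N (fun i => sumN N (fun j =>
      2 * (Rabs (Th j - Th i) - thinf i j) * abs_rslope (Th j - Th i) (V j - V i))).

Definition energy_power (Th W A : nat -> R) : R :=
  sumN N (fun i => W i * A i)
  + k2 / (2 * INR N) * sumN N (fun i => sumN N (fun j =>
      (Rabs (Th j - Th i) - thinf i j) * sgn (Th j - Th i) * (W j - W i))).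

Lemma energy_right_deriv (theta omega : R -> nat -> R) u V A :
  (forall i, (i < N)%nat -> right_deriv (fun t => theta t i) u (V i)) ->
  (forall i, (i < N)%nat -> right_deriv (fun t => omega t i) u (A i)) ->
  right_deriv (fun t => energy N k2 thinf (theta t) (omega t)) u
    (energy_rslope (theta u) (omega u) V A).
Proof.
  intros HV HA. unfold energy, energy_rslope.
  apply right_deriv_plus; apply right_deriv_scal; apply right_deriv_sum; intros i Hi.
  - apply (right_deriv_sqr (fun t => omega t i)), HA, Hi.
  - apply right_deriv_sum. intros j Hj.
    apply (right_deriv_sqr (fun t => Rabs (theta t j - theta t i) - thinf i j)).
    apply (right_deriv_sub_const (fun t => Rabs (theta t j - theta t i))).
    apply (right_deriv_abs (fun t => theta t j - theta t i)).
    apply (right_deriv_minus (fun t => theta t j) (fun t => theta t i)); auto.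
Qed.

Lemma energy_right_cont (theta omega : R -> nat -> R) u :
  (forall i, (i < N)%nat -> right_cont (fun t => theta t i) u) ->
  (forall i, (i < N)%nat -> right_cont (fun t => omega t i) u) ->
  right_cont (fun t => energy N k2 thinf (theta t) (omega t)) u.
Proof.
  intros HT HW. unfold energy.
  apply right_cont_plus; apply right_cont_mult; try apply right_cont_const;
    apply right_cont_sum; intros i Hi.
  - now apply (right_cont_sqr (fun t => omega t i)), HW.
  - apply right_cont_sum. intros j Hj.
    apply (right_cont_sqr (fun t => Rabs (theta t j - theta t i) - thinf i j)).
    apply right_cont_minus; [|apply right_cont_const].
    apply (right_cont_abs (fun t => theta t j - theta t i)).
    apply right_cont_minus; auto.
Qed.

Lemma energy_rslope_odd_part Th W A :
  energy_rslope Th W W A - energy_rslope Th W (fun i => - W i) (fun i => - A i)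
  = 2 * energy_power Th W A.
Proof.
  pose proof INR_N_pos. unfold energy_rslope, energy_power.
  set (P := fun i j => (Rabs (Th j - Th i) - thinf i j) * sgn (Th j - Th i) * (W j - W i)).
  rewrite (sumN_ext N (fun i => 2 * W i * A i) (fun i => 2 * (W i * A i))) by (intros; ring).
  rewrite (sumN_ext N (fun i => 2 * W i * - A i) (fun i => -2 * (W i * A i))) by (intros; ring).
  rewrite !sumN_scal.
  assert (Hpot : forall i j,
        2 * (Rabs (Th j - Th i) - thinf i j) * abs_rslope (Th j - Th i) (W j - W i)
      = 2 * (Rabs (Th j - Th i) - thinf i j) * abs_rslope (Th j - Th i) (- W j - - W i)
        + 4 * P i j).
  { intros i j. unfold P. replace (- W j - - W i) with (- (W j - W i)) by ring.
    replace (abs_rslope (Th j - Th i) (W j - W i))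
      with (abs_rslope (Th j - Th i) (- (W j - W i)) + 2 * sgn (Th j - Th i) * (W j - W i))
      by (rewrite <- abs_rslope_odd_part; ring).
    ring. }
  rewrite (sumN_ext N (fun i => sumN N (fun j =>
      2 * (Rabs (Th j - Th i) - thinf i j) * abs_rslope (Th j - Th i) (W j - W i)))
    (fun i => sumN N (fun j =>
      2 * (Rabs (Th j - Th i) - thinf i j) * abs_rslope (Th j - Th i) (- W j - - W i))
      + 4 * sumN N (P i)))
    by (intros i _; rewrite <- sumN_scal, <- sumN_plus; apply sumN_ext; intros j _; apply Hpot).
  rewrite sumN_plus, sumN_scal. unfold P. field. lra.
Qed.

(* Symmetrize in (i, j): the couplings are symmetric, the bonding forces antisymmetric. *)
Lemma kuramoto_energy_power k0 k1 Th W :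
  energy_power Th W (kuramoto_rhs N k0 k1 k2 thinf Th W) = - / 2 * dissipation N k0 k1 Th W.
Proof.
  pose proof INR_N_pos. unfold energy_power, kuramoto_rhs, dissipation.
  set (c := fun i j => k0 * cos (Th j - Th i) + k1).
  set (f := fun i j => (Rabs (Th j - Th i) - thinf i j) * sgn (Th j - Th i)).
  set (T := fun i j => / INR N * W i * (c i j * (W j - W i)) + k2 / INR N * W i * f i j
                       + k2 / (2 * INR N) * (f i j * (W j - W i))).
  assert (Hrow : forall i, W i * (/ INR N * sumN N (fun j => c i j * (W j - W i))
                                  + k2 / INR N * sumN N (f i))
                           + k2 / (2 * INR N) * sumN N (fun j => f i j * (W j - W i))
                 = sumN N (T i)).
  { intros i. unfold T. rewrite !sumN_plus, !sumN_scal. ring. }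
  assert (Hpair : forall i j, (i < N)%nat -> (j < N)%nat ->
                  T i j + T j i = - / INR N * (c i j * (W j - W i) ^ 2)).
  { intros i j Hi Hj. unfold T, c, f.
    rewrite (Rabs_minus_sym (Th i)), (Hsym j i Hj Hi).
    replace (Th i - Th j) with (- (Th j - Th i)) by ring. rewrite cos_neg, sgn_opp.
    field. lra. }
  transitivity (sumN N (fun i => sumN N (T i))).
  { rewrite <- sumN_scal, <- sumN_plus. apply sumN_ext. intros i _. rewrite <- Hrow. reflexivity. }
  rewrite sumN_symmetrize.
  rewrite (sumN_ext N _ (fun i => - / INR N * sumN N (fun j => c i j * (W j - W i) ^ 2)))
    by (intros i Hi; rewrite <- sumN_scal; apply sumN_ext; intros j Hj; now apply Hpair).
  rewrite sumN_scal. unfold c. ring.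
Qed.

End Energy.

(** * Solutions stay in S *)

Lemma cos_lt_of_abs_lt x U : Rabs x < U -> U < PI -> cos U < cos x.
Proof.
  intros Hx HU. pose proof (Rabs_pos x).
  replace (cos x) with (cos (Rabs x))
    by (unfold Rabs; destruct (Rcase_abs x); [apply cos_neg|reflexivity]).
  apply cos_decreasing_1; lra.
Qed.

Section KuramotoSolution.

Variables (N : nat) (k0 k1 k2 : R) (thinf : nat -> nat -> R) (tau : Rbar)
  (theta omega : R -> nat -> R) (U : R).

Hypotheses (HN : (0 < N)%nat) (Hk0 : 0 <= k0) (Hk2 : 0 < k2)
  (Hsym : forall i j, (i < N)%nat -> (j < N)%nat -> thinf i j = thinf j i)
  (Hsol : is_solution N k0 k1 k2 thinf tau theta omega)
  (HkU : k0 * cos U + k1 > 0).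

Let E (s : R) : R := energy N k2 thinf (theta s) (omega s).

Let rhs (s : R) : nat -> R := kuramoto_rhs N k0 k1 k2 thinf (theta s) (omega s).

Lemma coupling_pos Th i j : in_S N U Th -> (i < N)%nat -> (j < N)%nat ->
  0 < k0 * cos (Th j - Th i) + k1.
Proof.
  intros [HUpi HTh] Hi Hj.
  assert (cos U < cos (Th j - Th i)) by (apply cos_lt_of_abs_lt; auto).
  nra.
Qed.

Lemma dissipation_nonneg Th W : in_S N U Th -> 0 <= dissipation N k0 k1 Th W.
Proof.
  intros HS. unfold dissipation. apply Rmult_le_pos; [left; apply Rinv_0_lt_compat, lt_0_INR, HN|].
  apply sumN_nonneg; intros i Hi; apply sumN_nonneg; intros j Hj.
  apply Rmult_le_pos; [left; apply coupling_pos|apply pow2_ge_0]; auto.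
Qed.

Lemma dissipation_eq0 Th W : in_S N U Th -> dissipation N k0 k1 Th W = 0 ->
  forall i j, (i < N)%nat -> (j < N)%nat -> W i = W j.
Proof.
  intros HS H0 i j Hi Hj. unfold dissipation in H0.
  assert (HNinv : / INR N <> 0) by (apply Rinv_neq_0_compat; pose proof (lt_0_INR N HN); lra).
  apply Rmult_integral in H0. destruct H0 as [|H0]; [contradiction|].
  assert (Hterm : forall i, (i < N)%nat -> forall j, (j < N)%nat ->
                  0 <= (k0 * cos (Th j - Th i) + k1) * (W j - W i) ^ 2)
    by (intros; apply Rmult_le_pos; [left; apply coupling_pos|apply pow2_ge_0]; auto).
  assert (Hrow := sumN_eq0_term N _ i (fun i Hi => sumN_nonneg N _ (Hterm i Hi)) H0 Hi).
  assert (Hij := sumN_eq0_term N _ j (Hterm i Hi) Hrow Hj).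
  pose proof (coupling_pos Th i j HS Hi Hj).
  destruct (Rmult_integral _ _ Hij) as [|Hd]; [lra|].
  destruct (Req_dec (W j - W i) 0); [lra|]. exfalso. now apply (pow_nonzero (W j - W i) 2).
Qed.

Lemma lt_tau_of_le (u b : R) : u <= b -> Rbar_lt b tau -> Rbar_lt u tau.
Proof. intros Hub Hb. exact (Rbar_le_lt_trans u b tau Hub Hb). Qed.

Lemma solution_one_sided u i : 0 < u -> Rbar_lt u tau -> (i < N)%nat ->
  right_deriv (fun s => theta s i) u (omega u i) /\ left_deriv (fun s => theta s i) u (omega u i) /\
  right_deriv (fun s => omega s i) u (rhs u i) /\ left_deriv (fun s => omega s i) u (rhs u i).
Proof.
  intros Hu Hut Hi. destruct (proj2 (proj2 (Hsol i Hi)) u Hu Hut) as [HT HW].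
  repeat split; [apply right_deriv_of_is_derive|apply left_deriv_of_is_derive
                |apply right_deriv_of_is_derive|apply left_deriv_of_is_derive]; assumption.
Qed.

Lemma theta_right_cont b i : 0 <= b -> Rbar_lt b tau -> (i < N)%nat ->
  right_cont (fun s => theta s i) b.
Proof.
  intros Hb Hbt Hi. destruct (Rle_lt_or_eq 0 b Hb) as [Hb'|<-]; [|apply (Hsol i Hi)].
  exact (right_deriv_cont _ _ _ (proj1 (solution_one_sided b i Hb' Hbt Hi))).
Qed.

Lemma energy_one_sided u : 0 < u -> Rbar_lt u tau ->
  right_deriv E u (energy_rslope N k2 thinf (theta u) (omega u) (omega u) (rhs u)) /\
  left_deriv E u (- energy_rslope N k2 thinf (theta u) (omega u)
                      (fun i => - omega u i) (fun i => - rhs u i)).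
Proof.
  intros Hu Hut. pose proof (fun i => solution_one_sided u i Hu Hut) as Hd. split.
  - apply energy_right_deriv; intros i Hi; apply Hd, Hi.
  - unfold left_deriv. rewrite Ropp_involutive.
    generalize (energy_right_deriv N k2 thinf (fun s => theta (- s)) (fun s => omega (- s)) (- u)
      (fun i => - omega u i) (fun i => - rhs u i)
      (fun i Hi => proj1 (proj2 (Hd i Hi))) (fun i Hi => proj2 (proj2 (proj2 (Hd i Hi))))).
    now rewrite Ropp_involutive.
Qed.

Lemma energy_right_cont_at b : 0 <= b -> Rbar_lt b tau -> right_cont E b.
Proof.
  intros Hb Hbt. destruct (Rle_lt_or_eq 0 b Hb) as [Hb'|<-].
  - exact (right_deriv_cont _ _ _ (proj1 (energy_one_sided b Hb' Hbt))).
  - apply energy_right_cont; intros i Hi; apply (Hsol i Hi).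
Qed.

Lemma energy_slopes_sum u :
  energy_rslope N k2 thinf (theta u) (omega u) (omega u) (rhs u)
  + - energy_rslope N k2 thinf (theta u) (omega u) (fun i => - omega u i) (fun i => - rhs u i)
  = - dissipation N k0 k1 (theta u) (omega u).
Proof.
  unfold rhs. rewrite <- Rminus_def, energy_rslope_odd_part, kuramoto_energy_power by assumption.
  field.
Qed.

Lemma energy_nonincreasing (b : R) : Rbar_lt b tau ->
  (forall y, 0 <= y < b -> in_S N U (theta y)) ->
  forall s t, 0 <= s <= t -> t <= b -> E t <= E s.
Proof.
  intros Hbt HS s t Hst Htb. destruct (Rle_lt_or_eq s t (proj2 Hst)) as [Hlt|<-]; [|lra].
  assert (Htt := lt_tau_of_le t b Htb Hbt).
  apply nonincreasing_of_one_sided_derivs; [lra| | |].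
  - apply energy_right_cont_at; [lra|]. apply (lt_tau_of_le s b); [lra|exact Hbt].
  - exact (left_deriv_cont _ _ _ (proj2 (energy_one_sided t ltac:(lra) Htt))).
  - intros u Hu. assert (Hut := lt_tau_of_le u b ltac:(lra) Hbt).
    destruct (energy_one_sided u ltac:(lra) Hut) as [Hr Hl].
    do 2 eexists. split; [exact Hr|]. split; [exact Hl|].
    rewrite energy_slopes_sum.
    pose proof (dissipation_nonneg (theta u) (omega u) (HS u ltac:(lra))).
    lra.
Qed.

Lemma velocities_sync_of_energy_const (b : R) : Rbar_lt b tau ->
  (forall y, 0 <= y < b -> in_S N U (theta y)) -> E b = E 0 ->
  forall u, 0 < u < b -> forall i j, (i < N)%nat -> (j < N)%nat -> omega u i = omega u j.
Proof.
  intros Hbt HS Hconst u Hu.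
  assert (Hflat0 : forall y, 0 <= y <= b -> E y = E 0).
  { intros y Hy. pose proof (energy_nonincreasing b Hbt HS 0 y ltac:(lra) ltac:(lra)).
    pose proof (energy_nonincreasing b Hbt HS y b ltac:(lra) ltac:(lra)). lra. }
  assert (Hflat : forall y, 0 <= y <= b -> E y = E u)
    by (intros y Hy; rewrite (Hflat0 y Hy), (Hflat0 u); [reflexivity|lra]).
  destruct (energy_one_sided u ltac:(lra) (lt_tau_of_le u b ltac:(lra) Hbt)) as [Hr Hl].
  apply right_deriv_locally_const in Hr.
  2: { generalize (at_right_lt u (b - u) ltac:(lra)). apply filter_imp.
       intros x Hx. apply Hflat. lra. }
  apply right_deriv_locally_const in Hl.
  2: { generalize (at_right_lt (- u) u ltac:(lra)). apply filter_imp.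
       intros x Hx. rewrite Ropp_involutive. apply Hflat. lra. }
  apply (dissipation_eq0 (theta u)); [apply HS; lra|].
  pose proof (energy_slopes_sum u). lra.
Qed.

Lemma phase_gap_nonincreasing (b : R) : 0 < b -> Rbar_lt b tau ->
  (forall u, 0 < u < b -> forall i j, (i < N)%nat -> (j < N)%nat -> omega u i = omega u j) ->
  forall i j, (i < N)%nat -> (j < N)%nat -> theta b i - theta b j <= theta 0 i - theta 0 j.
Proof.
  intros Hb Hbt Hsync i j Hi Hj.
  assert (Hlt : forall u, 0 <= u <= b -> Rbar_lt u tau)
    by (intros u Hu; apply (lt_tau_of_le u b); [lra|exact Hbt]).
  apply (nonincreasing_of_one_sided_derivs (fun s => theta s i - theta s j)); [lra| | |].
  - apply right_cont_minus; (apply theta_right_cont; [lra|apply Hlt; lra|assumption]).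
  - destruct (solution_one_sided b i Hb Hbt Hi) as [_ [Hli _]].
    destruct (solution_one_sided b j Hb Hbt Hj) as [_ [Hlj _]].
    exact (left_deriv_cont _ _ _ (left_deriv_minus _ _ _ _ _ Hli Hlj)).
  - intros u Hu. exists (omega u i - omega u j), (omega u i - omega u j).
    destruct (solution_one_sided u i ltac:(lra) (Hlt u ltac:(lra)) Hi) as [Hri [Hli _]].
    destruct (solution_one_sided u j ltac:(lra) (Hlt u ltac:(lra)) Hj) as [Hrj [Hlj _]].
    split; [now apply right_deriv_minus|]. split; [now apply left_deriv_minus|].
    rewrite (Hsync u Hu i j Hi Hj). lra.
Qed.

Lemma in_S_closed (b : R) : 0 < b -> Rbar_lt b tau -> U = U_bound N k2 thinf (E 0) ->
  in_S N U (theta 0) -> (forall y, 0 <= y < b -> in_S N U (theta y)) -> in_S N U (theta b).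
Proof.
  intros Hb Hbt HU HS0 HS. split; [apply HS0|]. intros i j Hi Hj.
  destruct (Nat.eq_dec i j) as [<-|Hij].
  { pose proof (proj2 HS0 i i Hi Hi) as H0. rewrite Rminus_eq_0 in *. exact H0. }
  assert (HEb : E b <= E 0) by (apply (energy_nonincreasing b); auto; lra).
  destruct (Rle_lt_or_eq _ _ HEb) as [Hlt|Heq].
  - rewrite HU. exact (pair_dist_lt_of_energy_lt N k2 thinf HN Hk2 Hsym _ _ _ i j Hi Hj Hij Hlt).
  - pose proof (velocities_sync_of_energy_const b Hbt HS Heq) as Hsync.
    pose proof (phase_gap_nonincreasing b Hb Hbt Hsync i j Hi Hj).
    pose proof (phase_gap_nonincreasing b Hb Hbt Hsync j i Hj Hi).
    replace (theta b i - theta b j) with (theta 0 i - theta 0 j) by lra. now apply HS0.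
Qed.

Lemma in_S_open (b : R) : 0 <= b -> Rbar_lt b tau -> in_S N U (theta b) ->
  at_right b (fun y => in_S N U (theta y)).
Proof.
  intros Hb Hbt [HUpi HSb].
  assert (Hpair : forall i, (i < N)%nat -> forall j, (j < N)%nat ->
                  at_right b (fun y => Rabs (theta y i - theta y j) < U)).
  { intros i Hi j Hj. apply (right_cont_lt_eventually (fun y => Rabs (theta y i - theta y j))).
    - apply right_cont_abs, right_cont_minus; apply theta_right_cont; auto.
    - apply HSb; auto. }
  generalize (filter_forall_lt (at_right b) N _
    (fun i Hi => filter_forall_lt (at_right b) N _ (Hpair i Hi))).
  apply filter_imp. intros y Hy. split; [exact HUpi|]. intros i j Hi Hj. exact (Hy i Hi j Hj).
Qed.

End KuramotoSolution.

Theorem lemma3p1 (N : nat) (k0 k1 k2 : R) (thinf : nat -> nat -> R)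
  (tau : Rbar) (theta omega : R -> nat -> R) :
  (2 <= N)%nat ->
  0 <= k0 -> 0 <= k1 -> 0 < k2 ->
  (forall i, (i < N)%nat -> thinf i i = 0) ->
  (forall i j, (i < N)%nat -> (j < N)%nat -> thinf i j = thinf j i) ->
  Rbar_lt 0 tau ->
  is_solution N k0 k1 k2 thinf tau theta omega ->
  let U := U_bound N k2 thinf (energy N k2 thinf (theta 0) (omega 0)) in
  in_S N U (theta 0) ->
  k0 * cos U + k1 > 0 ->
  forall t, 0 <= t -> Rbar_lt t tau -> in_S N U (theta t).
Proof.
  intros HN Hk0 _ Hk2 _ Hsym _ Hsol U HS0 HkU t Ht Htau.
  assert (HN0 : (0 < N)%nat) by lia.
  assert (Hlt : forall b, b <= t -> Rbar_lt b tau)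
    by (intros b Hb; exact (lt_tau_of_le tau b t Hb Htau)).
  apply (real_induction (fun y => in_S N U (theta y)) 0 t Ht HS0).
  - intros b Hb Hbefore.
    exact (in_S_closed N k0 k1 k2 thinf tau theta omega U HN0 Hk0 Hk2 Hsym Hsol HkU b
             (proj1 Hb) (Hlt b (proj2 Hb)) eq_refl HS0 Hbefore).
  - intros b Hb Hupto.
    exact (in_S_open N k0 k1 k2 thinf tau theta omega U Hsol b (proj1 Hb) (Hlt b ltac:(lra))
             (Hupto b ltac:(lra))).
Qed.
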